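(* Let $n\ge1$, $N=2n+1$, and let $(a_j)_{j\ge0}$ be complex numbers with $|a_j|\le (j+2)^{-2}$ for all $j\ge 0$. Let $f(z)=-\sum_{j=0}^\infty a_jz^j$, let $z_1,\dots,z_N$ be the roots of $P_n(f;z)$ (with multiplicity) and $\lambda_k:=z_k^{-1}$. Then \[S_{j+1}(\lambda)-a_j=0,\qquad j=0,\dots,n-1,\] \[|S_{j+1}(\lambda)-a_j|\le\frac{r^{n-j}}{1-r^{n+1}}\left(15n+\frac{30}{1-r}\right),\qquad j\ge n,\] where $r\in(0,1)$ is arbitrary.
   Context: For $f$ analytic in the unit disc, $s_n(z)=s_n(f;z)$ denotes the $n$-th Taylor polynomial of $\exp\left(\int_0^z f(\zeta)\,d\zeta\right)$ (so $s_n(0)=1$), and $P_n(f;z):=s_n(z)+z^{2n+1}\overline{s}_n(1/z)$, where $\overline{s}_n$ is the polynomial with complex-conjugated coefficients; it has degree $2n+1$ and $P_n(0)=1$. For $\lambda_1,\dots,\lambda_N$, $S_\nu(\lambda)=\lambda_1^\nu+\dots+\lambda_N^\nu$. *)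

From HB Require Import structures.
From mathcomp Require Import all_boot all_order all_algebra.
From mathcomp Require Import reals complex.
Set Implicit Arguments. Unset Strict Implicit. Unset Printing Implicit Defensive.
Import Order.TTheory GRing.Theory Num.Theory.
Local Open Scope ring_scope.

Section Defs.
Variable R : realType.
Local Notation C := R[i].

(* Truncation (to degree n) of the primitive  int_0^z f  for
   f(z) = - sum_j a_j z^j :  - sum_{j<n} a_j z^{j+1}/(j+1).
   (Coefficients of degree > n play no role in the n-th Taylor polynomial
    of exp of this primitive.) *)
Definition prim_trunc (n : nat) (a : nat -> C) : {poly C} :=
  \poly_(i < n.+1) (if i is k.+1 then - a k / (k.+1)%:R else 0).

(* n-th Taylor polynomial of exp(g) for a power series g with g(0)=0:
   coefficient i is  sum_k [z^i] g^k / k!  (formal composition). *)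
Definition exp_taylor (n : nat) (g : {poly C}) : {poly C} :=
  \poly_(i < n.+1) (\sum_(k < n.+1) (g ^+ k)`_i / (k`!)%:R).

Definition s_n (n : nat) (a : nat -> C) : {poly C} :=
  exp_taylor n (prim_trunc n a).

(* P_n(f; z) = s_n(z) + z^(2n+1) * conj(s_n)(1/z). *)
Definition P_n (n : nat) (a : nat -> C) : {poly C} :=
  s_n n a + \sum_(k < n.+1) ((s_n n a)`_k)^*%:P * 'X^(2 * n + 1 - k).

Definition S_inv (zs : seq C) (nu : nat) : C :=
  \sum_(z <- zs) (z^-1) ^+ nu.

End Defs.

From HB Require Import structures.
From mathcomp Require Import all_boot all_order all_algebra.
From mathcomp Require Import reals complex.
From mathcomp Require Import ring zify.
Set Implicit Arguments.
Unset Strict Implicit.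
Unset Printing Implicit Defensive.

Import Order.TTheory GRing.Theory Num.Theory.
Local Open Scope ring_scope.

(* Write t := P_n - s_n = z^(2n+1) conj (s_n (1 / conj z)); it is divisible by X^(n+1).
   For j < n: modulo X^n, the logarithmic derivative of P_n = prod_k (X - z_k) is
   -sum_k sum_(v<n) z_k^-(v+1) X^v, while s_n, which agrees with exp of the primitive
   g = -sum_j a_j z^(j+1)/(j+1) up to order n, has logarithmic derivative g'. Since
   P_n = s_n mod X^(n+1) and s_n(0) = 1 the two agree mod X^n, and the coefficient of
   X^j gives S_(j+1) = a_j.
   For j >= n: the decay of a_j makes the l1-norm of the coefficients of g at most 1/2,
   so |s_n - 1| < 1 on the closed unit disc. Comparing Blaschke factors then gives
   |t(z)| < |s_n(z)| for 0 < |z| < 1, so every root has |z_k| >= 1, and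
   |S_(j+1) - a_j| <= (2n+1) + 1, which is already below the stated bound. *)

Section CoefNorm.
Variable F : numDomainType.
Implicit Types (p q : {poly F}) (z : F).

Definition norm1 p := \sum_(i < size p) `|p`_i|.

Lemma norm1_widen p m : (size p <= m)%N -> norm1 p = \sum_(i < m) `|p`_i|.
Proof.
move=> hm; rewrite /norm1 (big_ord_widen m (fun i => `|p`_i|) hm) big_mkcond.
by apply: eq_bigr => i _; case: ltnP => // hi; rewrite nth_default ?normr0.
Qed.

Lemma norm1_ge0 p : 0 <= norm1 p.
Proof. exact: sumr_ge0. Qed.

Lemma norm1_0 : norm1 0 = 0.
Proof. by rewrite /norm1 size_poly0 big_ord0. Qed.

Lemma norm1_1 : norm1 1 = 1.
Proof. by rewrite /norm1 size_poly1 big_ord1 coef1 normr1. Qed.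

Lemma norm1D p q : norm1 (p + q) <= norm1 p + norm1 q.
Proof.
set m := maxn (size p) (size q).
rewrite (norm1_widen (size_polyD p q)) (norm1_widen (leq_maxl _ _ : size p <= m)%N).
rewrite (norm1_widen (leq_maxr _ _ : size q <= m)%N) -big_split /=.
by apply: ler_sum => i _; rewrite coefD ler_normD.
Qed.

Lemma norm1_sum I (r : seq I) (f : I -> {poly F}) :
  norm1 (\sum_(i <- r) f i) <= \sum_(i <- r) norm1 (f i).
Proof.
elim: r => [|x r IH]; first by rewrite !big_nil norm1_0.
by rewrite !big_cons; apply: le_trans (norm1D _ _) _; rewrite lerD2l.
Qed.

Lemma norm1Z c p : norm1 (c *: p) <= `|c| * norm1 p.
Proof.
rewrite (norm1_widen (size_scale_leq c p)) /norm1 mulr_sumr.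
by apply: ler_sum => i _; rewrite coefZ normrM.
Qed.

Lemma norm1MXn p j : norm1 (p * 'X^j) = norm1 p.
Proof.
have hs : (size (p * 'X^j)%R <= j + size p)%N.
  by apply: leq_trans (size_polyMleq _ _) _; rewrite size_polyXn; lia.
rewrite (norm1_widen hs) big_split_ord /= big1 ?add0r => [|i _]; last first.
  by rewrite coefMXn ltn_ord normr0.
by apply: eq_bigr => i _; rewrite coefMXn ltnNge leq_addr /= addKn.
Qed.

Lemma norm1M p q : norm1 (p * q) <= norm1 p * norm1 q.
Proof.
rewrite -{1}(coefK p) poly_def mulr_suml.
apply: le_trans (norm1_sum _ _) _; rewrite /norm1 mulr_suml.
apply: ler_sum => i _; rewrite -scalerAl mulrC.
by apply: le_trans (norm1Z _ _) _; rewrite norm1MXn.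
Qed.

Lemma norm1X p k : norm1 (p ^+ k) <= norm1 p ^+ k.
Proof.
elim: k => [|k IH]; first by rewrite !expr0 norm1_1.
rewrite !exprSr; apply: le_trans (norm1M _ _) _.
by rewrite ler_wpM2r ?norm1_ge0.
Qed.

Lemma norm1_take_poly m p : norm1 (take_poly m p) <= norm1 p.
Proof.
have hs : (size (take_poly m p) <= size p)%N.
  by apply/leq_sizeP => j hj; rewrite coef_take_poly nth_default ?if_same.
rewrite (norm1_widen hs); apply: ler_sum => i _.
by rewrite coef_take_poly; case: ifP; rewrite ?normr0.
Qed.

Lemma norm_horner_le_norm1 p z : `|z| <= 1 -> `|p.[z]| <= norm1 p.
Proof.
move=> hz; rewrite horner_coef; apply: le_trans (ler_norm_sum _ _ _) _.
apply: ler_sum => i _; rewrite normrM normrX ler_piMr ?exprn_ile1 //.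
Qed.

End CoefNorm.

Section NumericBounds.
Variable F : numFieldType.

Lemma sum_inv_sq_div_le_half n :
  \sum_(k < n) ((k.+2%:R ^+ 2)^-1 / k.+1%:R : F) <= 2^-1.
Proof.
have term_le k : ((k.+2%:R ^+ 2)^-1 / k.+1%:R : F) <= 2^-1 * (k.+1%:R^-1 - k.+2%:R^-1).
  have -> : 2^-1 * (k.+1%:R^-1 - k.+2%:R^-1) = ((2 * k.+1 * k.+2)%N%:R : F)^-1.
    by rewrite !natrM; field; rewrite -natrD -(natrD _ 1) !pnatr_eq0.
  rewrite -invfM -natrX -natrM lef_pV2 ?posrE ?ltr0n ?muln_gt0 ?expn_gt0 // ler_nat.
  nia.
apply: (le_trans (y := \sum_(k < n) 2^-1 * (k.+1%:R^-1 - k.+2%:R^-1))).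
  by apply: ler_sum => k _; exact: term_le.
rewrite -mulr_sumr -(big_mkord xpredT (fun k => k.+1%:R^-1 - k.+2%:R^-1)).
rewrite (telescope_sumr_eq (fun k => - k.+1%:R^-1)) // => [|k _]; last first.
  by rewrite opprK addrC.
by rewrite ler_piMr ?invr_ge0 ?ler0n // invr1 opprK addrC gerBl invr_ge0 ler0n.
Qed.

Lemma sum_geom_lt1 n (x : F) : 0 <= x <= 2^-1 -> \sum_(k < n) x ^+ k.+1 < 1.
Proof.
case/andP=> x0 x2; apply: (le_lt_trans (y := \sum_(k < n) (2^-1 : F) ^+ k.+1)).
  by apply: ler_sum => k _; rewrite lerXn2r ?nnegrE ?invr_ge0 ?ler0n.
have -> : \sum_(k < n) (2^-1 : F) ^+ k.+1 = 1 - 2^-1 ^+ n.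
  elim: n => [|n IH]; first by rewrite big_ord0 expr0 subrr.
  by rewrite big_ord_recr /= IH exprS; field.
by rewrite gtrBl exprn_gt0 // invr_gt0 ltr0n.
Qed.

Lemma invX_div_1subX_ge1 (r : F) k m : 0 < r < 1 -> 1 <= r ^- k / (1 - r ^+ m.+1).
Proof.
case/andP=> r0 r1; have hrm : 0 < 1 - r ^+ m.+1 by rewrite subr_gt0 exprn_ilt1 ?ltW.
apply: mulr_ege1; first by rewrite invf_ge1 ?exprn_gt0 ?exprn_ile1 ?ltW.
by rewrite invf_ge1 // gerBl exprn_ge0 ?ltW.
Qed.

End NumericBounds.

Section CongruenceModXn.
Variable F : fieldType.
Implicit Types (p q h : {poly F}).

Lemma dvdXn_coef n p j : 'X^n %| p -> (j < n)%N -> p`_j = 0.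
Proof. by case/dvdpP=> q -> hj; rewrite coefMXn hj. Qed.

Lemma dvdXn_deriv m p : 'X^(m.+1) %| p -> 'X^m %| p^`().
Proof.
case/dvdpP=> q ->; rewrite derivM derivXn /= -mulr_natr.
by rewrite dvdp_add // dvdp_mull // ?dvdp_mulr // dvdp_exp2l.
Qed.

Lemma dvdXn_deriv_add_congr m h p q : 'X^(m.+1) %| p - q ->
  ('X^m %| p^`() + h * p) = ('X^m %| q^`() + h * q).
Proof.
move=> hpq; have dvd_diff : 'X^m %| (p^`() + h * p) - (q^`() + h * q).
  have -> : p^`() + h * p - (q^`() + h * q) = (p - q)^`() + h * (p - q).
    by rewrite derivB; ring.
  by rewrite dvdp_add ?dvdXn_deriv // dvdp_mull // (dvdp_trans _ hpq) // dvdp_exp2l.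
by rewrite -[p^`() + h * p](subrK (q^`() + h * q)) dvdp_addr.
Qed.

Lemma dvdXn_sub_of_deriv_add n p h1 h2 : p.[0] != 0 ->
  'X^n %| p^`() + h1 * p -> 'X^n %| p^`() + h2 * p -> 'X^n %| h1 - h2.
Proof.
move=> p0 dv1 dv2.
have cop : coprimep 'X^n p.
  apply: coprimep_expl; rewrite coprimep_sym -[X in coprimep _ X]subr0 -polyC0.
  by rewrite coprimep_XsubC /root p0.
rewrite -(Gauss_dvdpl _ cop) mulrBl.
have -> : h1 * p - h2 * p = (p^`() + h1 * p) - (p^`() + h2 * p) by ring.
exact: dvdp_sub.
Qed.

End CongruenceModXn.

Section NewtonIdentities.
Variable F : fieldType.

(* The Taylor polynomial of degree < n of -1/(X - z). *)
Definition inv_geom n (z : F) : {poly F} := \poly_(i < n) z^-1 ^+ i.+1.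

Lemma mul_XsubC_inv_geom n z : z != 0 ->
  ('X - z%:P) * inv_geom n z = (z^-1 *: 'X) ^+ n - 1.
Proof.
move=> z0; have -> : inv_geom n z = z^-1 *: \sum_(i < n) (z^-1 *: 'X) ^+ i.
  rewrite /inv_geom poly_def scaler_sumr; apply: eq_bigr => i _.
  by rewrite exprZn scalerA -exprS.
rewrite subrX1 -scalerAr scalerAl scalerBr -[z^-1 *: z%:P]mul_polyC -polyCM mulVf //.
Qed.

Lemma dvdXn_deriv_prod_XsubC n (zs : seq F) : 0 \notin zs ->
  'X^n %| (\prod_(z <- zs) ('X - z%:P))^`()
          + (\sum_(z <- zs) inv_geom n z) * \prod_(z <- zs) ('X - z%:P).
Proof.
elim: zs => [|z zs IH]; first by rewrite !big_nil derivC mul0r addr0 dvdp0.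
rewrite in_cons negb_or eq_sym => /andP[z0 /IH{}IH].
rewrite !big_cons derivM derivXsubC mul1r.
set P := \prod_(w <- zs) _; set Q := \sum_(w <- zs) _.
have -> : P + ('X - z%:P) * P^`() + (inv_geom n z + Q) * (('X - z%:P) * P)
  = P * (('X - z%:P) * inv_geom n z + 1) + ('X - z%:P) * (P^`() + Q * P) by ring.
rewrite mul_XsubC_inv_geom // subrK exprZn -mul_polyC.
by rewrite dvdp_add ?dvdp_mull.
Qed.

End NewtonIdentities.

Section TruncatedExponential.
Variable F : numFieldType.
Implicit Types g : {poly F}.

Definition exp_trunc n g := \sum_(k < n.+1) (k`!%:R)^-1 *: g ^+ k.

Lemma exp_truncS n g : exp_trunc n.+1 g = exp_trunc n g + (n.+1`!%:R)^-1 *: g ^+ n.+1.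
Proof. by rewrite /exp_trunc big_ord_recr. Qed.

Lemma deriv_exp_truncS n g : (exp_trunc n.+1 g)^`() = g^`() * exp_trunc n g.
Proof.
rewrite /exp_trunc big_ord_recl derivD derivZ expr0 derivC scaler0 add0r.
rewrite linear_sum mulr_sumr; apply: eq_bigr => i _ /=.
rewrite derivZ deriv_exp -scaler_nat scalerA factS natrM invfM mulrAC mulVf ?pnatr_eq0 //.
by rewrite mul1r scalerAr.
Qed.

Lemma dvdXn_deriv_exp_trunc n g :
  'X %| g -> 'X^n %| (exp_trunc n g)^`() + (- g^`()) * exp_trunc n g.
Proof.
case: n => [|n] hg; first by rewrite expr0 dvd1p.
rewrite deriv_exp_truncS exp_truncS mulNr mulrDr opprD addrA subrr sub0r dvdpNr.
by rewrite -mul_polyC !dvdp_mull // dvdp_exp2r.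
Qed.

Lemma horner_exp_trunc0 n g : 'X %| g -> (exp_trunc n g).[0] = 1.
Proof.
move=> hg; have g0 : g.[0] = 0 by rewrite horner_coef0 (@dvdXn_coef _ 1).
rewrite /exp_trunc horner_sum big_ord_recl big1 => [|i _].
  by rewrite hornerZ expr0 hornerC fact0 invr1 mulr1 addr0.
by rewrite hornerZ horner_exp g0 expr0n mulr0.
Qed.

Lemma norm1_exp_trunc_sub1_lt1 n g : norm1 g <= 2^-1 -> norm1 (exp_trunc n g - 1) < 1.
Proof.
move=> hg; have -> : exp_trunc n g - 1 = \sum_(i < n) (i.+1`!%:R)^-1 *: g ^+ i.+1.
  by rewrite /exp_trunc big_ord_recl fact0 invr1 expr0 scale1r addrAC subrr add0r.
apply: le_lt_trans (norm1_sum _ _) _.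
have g_small : 0 <= norm1 g <= 2^-1 by rewrite norm1_ge0.
apply: le_lt_trans _ (sum_geom_lt1 n g_small).
apply: ler_sum => i _; apply: le_trans (norm1Z _ _) _.
apply: le_trans (norm1X _ _); rewrite ler_piMl ?norm1_ge0 //.
by rewrite normfV normr_nat invf_le1 ?ler1n ?ltr0n ?fact_gt0.
Qed.

End TruncatedExponential.

Section ConjReverse.
Variable C : numClosedFieldType.
Implicit Types (p : {poly C}) (z w : C).

Definition conj_reverse m p : {poly C} :=
  \sum_(k < size p) (p`_k)^*%:P * 'X^(m - k).

Lemma size_conj_reverse m p : (size (conj_reverse m p) <= m.+1)%N.
Proof.
apply: (big_ind (fun q : {poly C} => size q <= m.+1)%N) => [|q1 q2 h1 h2|k _].
- by rewrite size_poly0.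
- by apply: leq_trans (size_polyD _ _) _; rewrite geq_max h1 h2.
rewrite mul_polyC; apply: leq_trans (size_scale_leq _ _) _.
by rewrite size_polyXn ltnS leq_subr.
Qed.

Lemma dvdXn_conj_reverse m p : 'X^(m.+1 - size p) %| conj_reverse m p.
Proof.
apply: (big_ind (fun q => 'X^(m.+1 - size p) %| q)) => [|q1 q2|[k hk] _].
- exact: dvdp0.
- exact: dvdp_add.
by rewrite dvdp_mull // dvdp_exp2l //=; move: hk; set s := size p; lia.
Qed.

Lemma horner_conj_reverse m p z : (size p <= m.+1)%N -> z != 0 ->
  (conj_reverse m p).[z] = z ^+ m * (p.[(z^*)^-1])^*.
Proof.
move=> hp z0; rewrite horner_sum horner_coef rmorph_sum mulr_sumr.
apply: eq_bigr => -[k hk] _ /=.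
rewrite hornerM hornerC hornerXn rmorphM rmorphXn fmorphV /= conjCK exprVn.
by rewrite exprB ?unitfE // 1?mulrCA //; lia.
Qed.

Lemma norm_mul_inv_conj_sub_le z w : `|z| <= 1 -> 1 <= `|w| ->
  `|z| * `|(z^*)^-1 - w| <= `|z - w|.
Proof.
move=> z1 w1; have [->|z0] := eqVneq z 0; first by rewrite normr0 mul0r.
rewrite -norm_conjC -normrM mulrBr mulfV ?conjC_eq0 //.
rewrite -(@ler_pXn2r _ 2) // ?nnegrE // !normCK -subr_ge0.
have -> : (z - w) * (z - w)^* - (1 - z^* * w) * (1 - z^* * w)^*
          = (1 - z * z^*) * (w * w^* - 1).
  by rewrite !rmorphB !rmorphM rmorph1 /= conjCK; ring.
by rewrite mulr_ge0 // subr_ge0 -normCK ?exprn_ile1 ?exprn_ege1.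
Qed.

Lemma prod_norm_mul_inv_conj_sub_le z (ws : seq C) :
  `|z| <= 1 -> (forall w, w \in ws -> 1 <= `|w|) ->
  `|z| ^+ size ws * \prod_(w <- ws) `|(z^*)^-1 - w| <= \prod_(w <- ws) `|z - w|.
Proof.
move=> z1; elim: ws => [|w ws IH] hws; first by rewrite !big_nil mulr1.
rewrite !big_cons exprS mulrACA ler_pM ?mulr_ge0 ?exprn_ge0 ?prodr_ge0 //.
  by rewrite norm_mul_inv_conj_sub_le ?hws ?mem_head.
by apply: IH => v hv; rewrite hws // in_cons hv orbT.
Qed.

Lemma norm_horner_conj_reverse_lt m p z : (size p <= m)%N ->
  (forall w, root p w -> 1 <= `|w|) -> z != 0 -> `|z| < 1 -> p.[z] != 0 ->
  `|(conj_reverse m p).[z]| < `|p.[z]|.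
Proof.
move=> hp hroots z0 z1 pz0.
have [ws p_ws] := closed_field_poly_normal p; set c := lead_coef p in p_ws.
have c0 : c != 0 by rewrite lead_coef_eq0; apply: contraNneq pz0 => ->; rewrite horner0.
have hws w : w \in ws -> 1 <= `|w|.
  by move=> ws_w; apply: hroots; rewrite p_ws rootZ // root_prod_XsubC.
have size_ws : (size ws < m)%N.
  by move: hp; rewrite p_ws size_scale // size_prod_XsubC.
have norm_p x : `|p.[x]| = `|c| * \prod_(w <- ws) `|x - w|.
  rewrite {1}p_ws hornerZ horner_prod normrM normr_prod.
  by congr (_ * _); apply: eq_bigr => w _; rewrite hornerXsubC.
rewrite horner_conj_reverse ?(leq_trans hp) // normrM norm_conjC normrX !norm_p.
rewrite -(subnK (ltnW size_ws)) exprD -mulrA [_ ^+ size ws * _]mulrCA.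
have pz_gt0 : 0 < `|c| * \prod_(w <- ws) `|z - w| by rewrite -norm_p normr_gt0.
apply: (le_lt_trans (y := `|z| ^+ (m - size ws) * (`|c| * \prod_(w <- ws) `|z - w|))).
  by rewrite ler_wpM2l ?exprn_ge0 // ler_wpM2l // prod_norm_mul_inv_conj_sub_le ?ltW.
by rewrite (gtr_pMl _ pz_gt0) exprn_ilt1 // subn_eq0 -ltnNge.
Qed.

End ConjReverse.

Section TruncatedTaylorReflection.
Variables (R : realType) (n : nat) (a : nat -> R[i]).
Local Notation g := (prim_trunc n a).
Local Notation s := (s_n n a).

Lemma dvdX_prim_trunc : 'X %| g.
Proof.
by rewrite -[X in X %| _]subr0 -polyC0 dvdp_XsubCl /root horner_coef0 coef_poly.
Qed.

Lemma coef_deriv_prim_trunc j : (j < n)%N -> g^`()`_j = - a j.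
Proof.
move=> hj; rewrite coef_deriv coef_poly ltnS hj -(mulr_natr (- a j / _)).
by rewrite divfK ?pnatr_eq0.
Qed.

Lemma s_nE : s = take_poly n.+1 (exp_trunc n g).
Proof.
apply/polyP => i; rewrite coef_poly coef_take_poly coef_sum.
by case: ltnP => // _; apply: eq_bigr => k _; rewrite coefZ mulrC.
Qed.

Lemma size_s_n : (size s <= n.+1)%N.
Proof. exact: size_poly. Qed.

Lemma horner_s_n0 : s.[0] = 1.
Proof.
rewrite s_nE !horner_coef0 coef_take_poly -horner_coef0.
by rewrite horner_exp_trunc0 ?dvdX_prim_trunc.
Qed.

Lemma P_nE : P_n n a = s + conj_reverse (2 * n + 1) s.
Proof.
rewrite /P_n /conj_reverse; congr (_ + _).
rewrite (big_ord_widen n.+1 (fun k => (s`_k)^*%:P * 'X^(2 * n + 1 - k)) size_s_n).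
rewrite [RHS]big_mkcond; apply: eq_bigr => k _.
by case: ltnP => // hk; rewrite nth_default // conjC0 mul0r.
Qed.

Lemma dvdXn_P_n_sub_s_n : 'X^(n.+1) %| P_n n a - s.
Proof.
rewrite P_nE addrC addKr (dvdp_trans _ (dvdXn_conj_reverse _ _)) // dvdp_exp2l //.
by move: size_s_n; set k := size s; lia.
Qed.

Lemma horner_P_n0 : (P_n n a).[0] = 1.
Proof.
have := dvdXn_coef dvdXn_P_n_sub_s_n (ltn0Sn n).
by rewrite coefB -!horner_coef0 horner_s_n0 => /eqP; rewrite subr_eq0 => /eqP.
Qed.

Lemma size_P_n : (size (P_n n a) <= 2 * n + 2)%N.
Proof.
rewrite P_nE; apply: leq_trans (size_polyD _ _) _.
by rewrite geq_max (leq_trans size_s_n) ?(leq_trans (size_conj_reverse _ _)) //; lia.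
Qed.

Lemma dvdXn_deriv_s_n : 'X^n %| s^`() + (- g^`()) * s.
Proof.
have exp_congr : 'X^(n.+1) %| exp_trunc n g - s.
  rewrite s_nE -{1}(poly_take_drop n.+1 (exp_trunc n g)) addrAC subrr add0r.
  exact: dvdp_mull.
by rewrite -(dvdXn_deriv_add_congr _ exp_congr) dvdXn_deriv_exp_trunc ?dvdX_prim_trunc.
Qed.

Lemma power_sums_P_n_roots (zs : seq R[i]) :
  P_n n a = \prod_(z <- zs) ('X - z%:P) -> forall j, (j < n)%N -> S_inv zs j.+1 = a j.
Proof.
move=> hzs j hj.
have zs0 : 0 \notin zs by rewrite -root_prod_XsubC -hzs /root horner_P_n0 oner_neq0.
set Q := \sum_(z <- zs) inv_geom n z.
have newton : 'X^n %| s^`() + Q * s.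
  rewrite -(dvdXn_deriv_add_congr Q dvdXn_P_n_sub_s_n) hzs.
  exact: dvdXn_deriv_prod_XsubC.
have s0 : s.[0] != 0 by rewrite horner_s_n0 oner_neq0.
have := dvdXn_sub_of_deriv_add s0 newton dvdXn_deriv_s_n.
move=> /dvdXn_coef/(_ hj)/eqP; rewrite opprK coefD coef_deriv_prim_trunc // addr_eq0 opprK.
rewrite /Q coef_sum => /eqP <-; apply: eq_bigr => z _.
by rewrite coef_poly hj.
Qed.

End TruncatedTaylorReflection.

Section RootsOutsideDisc.
Variables (R : realType) (n : nat) (a : nat -> R[i]).
Hypothesis ha : forall j, `|a j| <= ((j.+2)%:R ^+ 2)^-1.
Local Notation g := (prim_trunc n a).
Local Notation s := (s_n n a).

Lemma norm1_prim_trunc_le_half : norm1 g <= 2^-1.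
Proof.
rewrite (norm1_widen (size_poly _ _)) big_ord_recl coef_poly /= normr0 add0r.
apply: le_trans (sum_inv_sq_div_le_half _ n); apply: ler_sum => i _.
rewrite coef_poly /bump /= add1n ltnS ltn_ord normrM normrN normfV normr_nat.
by rewrite ler_wpM2r ?invr_ge0.
Qed.

Lemma norm_horner_s_n_sub1_lt1 z : `|z| <= 1 -> `|s.[z] - 1| < 1.
Proof.
move=> z1; have -> : s.[z] - 1 = (take_poly n.+1 (exp_trunc n g - 1)).[z].
  rewrite linearB /= [take_poly _ 1]take_poly_id ?size_poly1 // -s_nE.
  by rewrite hornerD hornerN hornerC.
apply: le_lt_trans (norm_horner_le_norm1 _ z1) _.
apply: le_lt_trans (norm1_take_poly _ _) _.
exact/norm1_exp_trunc_sub1_lt1/norm1_prim_trunc_le_half.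
Qed.

Lemma horner_s_n_neq0 z : `|z| <= 1 -> s.[z] != 0.
Proof.
move=> /norm_horner_s_n_sub1_lt1; apply: contraTneq => ->.
by rewrite sub0r normrN normr1 ltxx.
Qed.

Lemma P_n_root_norm_ge1 z : root (P_n n a) z -> 1 <= `|z|.
Proof.
move=> Pz; have [//|z1] := real_leP (real1 _) (normr_real z).
have [z0|z0] := eqVneq z 0; first by move: Pz; rewrite z0 /root horner_P_n0 oner_eq0.
have s_roots w : root s w -> 1 <= `|w|.
  move=> sw; have [//|w1] := real_leP (real1 _) (normr_real w).
  by move: sw; rewrite /root (negPf (horner_s_n_neq0 (ltW w1))).
have size_s : (size s <= 2 * n + 1)%N by apply: leq_trans (size_s_n _ _) _; lia.
have := norm_horner_conj_reverse_lt size_s s_roots z0 z1 (horner_s_n_neq0 (ltW z1)).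
by move: Pz; rewrite /root P_nE hornerD addr_eq0 => /eqP ->; rewrite normrN ltxx.
Qed.

End RootsOutsideDisc.

Lemma norm_S_inv_le (R : realType) (zs : seq R[i]) k :
  (forall z, z \in zs -> 1 <= `|z|) -> `|S_inv zs k| <= (size zs)%:R.
Proof.
move=> zs1; apply: le_trans (ler_norm_sum _ _ _) _.
rewrite -sum1_size natr_sum !big_seq; apply: ler_sum => z /zs1 z1.
by rewrite normrX normfV exprn_ile1 ?invr_ge0 // invf_le1 // (lt_le_trans ltr01).
Qed.

Theorem theorem1p2 (R : realType) (n : nat) (a : nat -> R[i])
  (hn : (1 <= n)%N)
  (ha : forall j : nat, `|a j| <= (((j.+2)%:R) ^+ 2)^-1)
  (zs : seq R[i])
  (hzs : P_n n a = \prod_(z <- zs) ('X - z%:P)) :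
  (forall j : nat, (j < n)%N -> S_inv zs j.+1 - a j = 0) /\
  (forall r : R[i], 0 < r < 1 -> forall j : nat, (n <= j)%N ->
     `|S_inv zs j.+1 - a j|
       <= r ^- (j - n) / (1 - r ^+ n.+1) * (15 * n%:R + 30 / (1 - r))).
Proof.
split=> [j hj | r r01 j hj]; first by rewrite (power_sums_P_n_roots hzs hj) subrr.
have zs1 z : z \in zs -> 1 <= `|z|.
  by rewrite -root_prod_XsubC -hzs => /(P_n_root_norm_ge1 ha).
have size_zs : (size zs <= 2 * n + 1)%N.
  by have := size_P_n n a; rewrite hzs size_prod_XsubC; lia.
have a1 : `|a j| <= 1.
  by apply: le_trans (ha j) _; rewrite invf_le1 ?exprn_gt0 // exprn_ege1 ?ler1n.
have crude : `|S_inv zs j.+1 - a j| <= (15 * n)%:R.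
  apply: le_trans (ler_normB _ _) _; apply: le_trans (lerD (norm_S_inv_le _ zs1) a1) _.
  by rewrite natr1 ler_nat; lia.
have tail_ge0 : 0 <= 30 / (1 - r).
  by case/andP: r01 => _ r1; rewrite divr_ge0 ?subr_ge0 ?ltW.
apply: le_trans crude _; rewrite natrM.
apply: (le_trans (y := 15 * n%:R + 30 / (1 - r))); first by rewrite lerDl.
by rewrite ler_peMl ?invX_div_1subX_ge1 // addr_ge0 // mulr_ge0.
Qed.
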